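(* Let $(G,f)$ be any weighted graph. Then $$\max\{\Delta_f(G)+1,\ \Gamma_f(G)\}=\max\{\Delta_f(G)+1,\ W_f(G)\}.$$
   Context: Graphs are finite and undirected; multiple edges are allowed, loops are not. A weighted graph $(G,f)$ is a graph $G$ together with a function $f\colon V(G)\to\mathbb{Z}_{>0}$. For $U\subseteq V(G)$ write $f(U)=\sum_{v\in U}f(v)$, and $f(H)=f(V(H))$ for a subgraph $H$. $E[U]$ denotes the set of edges with both ends in $U$. $\partial U$ denotes the set of edges with exactly one end in $U$. $d_G(v)$ is the degree of $v$, counting multiple edges with multiplicity. The fractional maximum $f$-degree is $\Delta_f^*(G)=\max_{v\in V(G)} d_G(v)/f(v)$. The maximum $f$-degree is $\Delta_f(G)=\lceil \Delta_f^*(G)\rceil$. The fractional $f$-density is $W_f^*(G)=\max\{ |E(H)|/\lfloor \tfrac12 f(H)\rfloor : H\subseteq G \text{ a subgraph},\ |V(H)|\ge 2\}$, with $W_f^*(G)=0$ if $|V(G)|<2$. The $f$-density is $W_f(G)=\lceil W_f^*(G)\rceil$. Define $$\Gamma_f^*(G)=\max\left\{\frac{|E[U]|+|F|}{\lfloor \tfrac12 (f(U)+|F|)\rfloor} : U\subseteq V(G),\ F\subseteq \partial U,\ f(U)+|F|\ge 2\right\},$$ with $\Gamma_f^*(G)=0$ if $G$ has no edge. Set $\Gamma_f(G)=\lceil \Gamma_f^*(G)\rceil$. *)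

From HB Require Import structures.
From mathcomp Require Import all_boot all_order all_algebra.
Set Implicit Arguments. Unset Strict Implicit. Unset Printing Implicit Defensive.
Import Order.TTheory GRing.Theory Num.Theory.

(* A finite multigraph (no loops) is given by a finite vertex type V, a finite
   edge type E, and two endpoint maps s t : E -> V with s e != t e.
   Parallel edges are distinct elements of E with the same endpoints. *)

Section WG.
Variables (V E : finType) (s t : E -> V) (f : V -> nat).

Definition deg (v : V) : nat := #|[set e : E | (s e == v) || (t e == v)]|.

Definition fw (U : {set V}) : nat := \sum_(v in U) f v.

Definition edges_in (U : {set V}) : {set E} :=
  [set e : E | (s e \in U) && (t e \in U)].

Definition bd (U : {set V}) : {set E} :=
  [set e : E | (s e \in U) != (t e \in U)].

Definition ratio (a b : nat) : rat := (a%:R / b%:R)%R.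

Definition Delta_star : rat :=
  \big[Order.max/0%R]_(v : V) ratio (deg v) (f v).
Definition Delta_f : int := Num.ceil Delta_star.

Definition W_star : rat :=
  \big[Order.max/0%R]_(U : {set V} | 2 <= #|U|)
    \big[Order.max/0%R]_(S : {set E} | S \subset edges_in U)
       ratio #|S| (fw U)./2.
Definition W_f : int := Num.ceil W_star.

Definition Gamma_star : rat :=
  if #|E| == 0 then 0%R else
  \big[Order.max/0%R]_(U : {set V})
    \big[Order.max/0%R]_(F : {set E} | (F \subset bd U) && (2 <= fw U + #|F|))
       ratio (#|edges_in U| + #|F|) (fw U + #|F|)./2.
Definition Gamma_f : int := Num.ceil Gamma_star.

End WG.

From Pilot Require Import Defs.
From mathcomp Require Import all_boot all_order all_algebra.
From mathcomp Require Import zify.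
Import Order.TTheory GRing.Theory Num.Theory.
Set Implicit Arguments. Unset Strict Implicit.

(* Write D = Delta_f and k = max (D + 1) W_f.  Two inequalities
   give the claim by a squeezing argument on max:
   (1) W_f <= Gamma_f: every subgraph ratio |S| / floor(f(U)/2) is bounded by
       the Gamma-ratio of the same U with F = set0, since S is a subset of E[U];
   (2) Gamma_f <= k: a Gamma-ratio with F = set0 is a W-ratio (or 0 when U has
       at most one vertex, hence no edge); with F nonempty, double counting the
       incidences inside U gives 2|E[U]| + |F| <= sum_(v in U) deg v <= D f(U),
       and an integer estimate turns this into
       |E[U]| + |F| <= (D + 1) floor((f(U) + |F|) / 2). *)

Lemma max_squeeze (d : Order.disp_t) (T : orderType d) (a w g : T) :
  (w <= g)%O -> (g <= Order.max a w)%O -> Order.max a g = Order.max a w.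
Proof.
move=> wg gmax; apply/eqP; rewrite eq_le; apply/andP; split.
  by rewrite ge_max le_max lexx gmax.
by rewrite ge_max !le_max lexx wg orbT.
Qed.

Lemma half_bound (e m n a : nat) : 2 * e + m <= n * a -> 0 < m ->
  e + m <= n.+1 * (a + m)./2.
Proof.
move=> le_sum m_gt0.
have a_gt0 : 0 < a by case: a le_sum => [|a] //; rewrite muln0; lia.
have half_eq := odd_double_half (a + m).
have : a + m <= 2 * (a + m)./2 + 1 by move: half_eq; case: (odd _) => /= <-; lia.
nia.
Qed.

Lemma ratio_le_nat (a b c : nat) : 0 < b -> a <= c * b ->
  (Defs.ratio a b <= (c%:R : rat))%R.
Proof.
by move=> b_gt0 le_ab; rewrite /Defs.ratio ler_pdivrMr ?ltr0n // -natrM ler_nat.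
Qed.

Lemma sum_indicator (T : finType) (U : {set T}) (x : T) :
  \sum_(i in U) ((x == i) : nat) = (x \in U).
Proof.
case xU: (x \in U).
  rewrite (bigD1 x) //= eqxx big1 // => i /andP[_ /negbTE].
  by rewrite eq_sym => ->.
by rewrite big1 // => i iU; case: eqP => // xi; rewrite xi iU in xU.
Qed.

Section WeightedGraph.
Variables (V E : finType) (s t : E -> V) (f : V -> nat).
Hypothesis noloop : forall e : E, s e != t e.

Lemma degree_sum (U : {set V}) :
  \sum_(v in U) deg s t v = \sum_(e : E) ((s e \in U) + (t e \in U)).
Proof.
rewrite /deg; under eq_bigr do rewrite -sum1_card big_mkcond /=.
rewrite exchange_big /=; apply: eq_bigr => e _.
rewrite -!sum_indicator -big_split /=; apply: eq_bigr => v _; rewrite inE.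
by have := noloop e; case: (s e =P v) => [->|_]; case: (t e =P v) => [->|_];
  rewrite ?eqxx.
Qed.

(* Edges inside U are counted twice, edges of F on the boundary once. *)
Lemma double_count (U : {set V}) (F : {set E}) : F \subset bd s t U ->
  2 * #|edges_in s t U| + #|F| <= \sum_(v in U) deg s t v.
Proof.
move=> /subsetP F_bd; rewrite degree_sum -!sum1_card.
rewrite [X in 2 * X]big_mkcond [X in _ + X]big_mkcond /= big_distrr -big_split.
apply: leq_sum => e _; have := F_bd e; rewrite !inE.
by case: (s e \in U); case: (t e \in U); case: (e \in F) => //= /(_ isT).
Qed.

Lemma edges_in_small (U : {set V}) : #|U| <= 1 -> edges_in s t U = set0.
Proof.
move=> /card_le1_eqP U_le1; apply/setP => e; rewrite !inE.
apply/negP => /andP[sU tU].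
by have := noloop e; rewrite (U_le1 _ _ sU tU) eqxx.
Qed.

Hypothesis fpos : forall v : V, 0 < f v.

Lemma card_le_fw (U : {set V}) : #|U| <= fw f U.
Proof. by rewrite -sum1_card /fw; apply: leq_sum => v _; exact: fpos. Qed.

Lemma Delta_f_nat : exists n : nat, Delta_f s t f = n /\
  forall v, deg s t v <= n * f v.
Proof.
have : (0 <= Delta_f s t f)%R.
  by rewrite /Delta_f -(ceil0 rat); apply: le_ceil; exact: bigmax_ge_id.
case D_eq: (Delta_f s t f) => [n|//] _; exists n; split => // v.
have ratio_le : (Defs.ratio (deg s t v) (f v) <= (n%:R : rat))%R.
  have := ceil_ge (Delta_star s t f); rewrite -/(Delta_f s t f) D_eq.
  by apply: le_trans; exact: le_bigmax.
by move: ratio_le; rewrite /Defs.ratio ler_pdivrMr ?ltr0n ?fpos // -natrM ler_nat.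
Qed.

Lemma W_star_le_Gamma_star : (W_star s t f <= Gamma_star s t f)%R.
Proof.
have Gamma_ge0 : (0 <= Gamma_star s t f)%R.
  by rewrite /Gamma_star; case: ifP => // _; exact: bigmax_ge_id.
apply/bigmax_leP; split => // U U_ge2; apply/bigmax_leP; split => // S S_sub.
rewrite /Gamma_star; case: ifP => [/eqP E_empty | _].
  have /eqP S_empty : #|S| == 0 by rewrite -leqn0 -E_empty max_card.
  by rewrite /Defs.ratio S_empty mul0r.
apply: (bigmax_sup U) => //; apply: (bigmax_sup set0).
  by rewrite sub0set cards0 addn0 (leq_trans U_ge2 (card_le_fw U)).
rewrite cards0 !addn0 /Defs.ratio ler_wpM2r ?invr_ge0 ?ler0n // ler_nat.
exact: subset_leq_card.
Qed.

Lemma Gamma_star_le (n : nat) (r : rat) :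
  (forall v, deg s t v <= n * f v) -> (n.+1%:R <= r)%R ->
  (W_star s t f <= r)%R -> (Gamma_star s t f <= r)%R.
Proof.
move=> deg_le n1_le W_le; have r_ge0 : (0 <= r)%R by apply: le_trans n1_le.
rewrite /Gamma_star; case: ifP => // _.
apply/bigmax_leP; split => // U _.
apply/bigmax_leP; split => // F /andP[F_bd f_ge2].
have [F_empty | F_nonempty] := posnP #|F|.
  rewrite F_empty !addn0 in f_ge2 *; case: (leqP 2 #|U|) => [U_ge2 | U_le1].
    apply: le_trans W_le; apply: (bigmax_sup U) => //.
    exact: (bigmax_sup (edges_in s t U)).
  by rewrite edges_in_small // cards0 /Defs.ratio mul0r.
have half_gt0 : 0 < (fw f U + #|F|)./2 by case: (fw f U + #|F|) f_ge2 => [|[|]].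
apply: le_trans n1_le; apply: ratio_le_nat half_gt0 _.
apply: half_bound F_nonempty; apply: leq_trans (double_count F_bd) _.
by rewrite /fw big_distrr /=; apply: leq_sum => v _; exact: deg_le.
Qed.

End WeightedGraph.

Theorem lemma1 (V E : finType) (s t : E -> V) (f : V -> nat)
  (noloop : forall e : E, s e != t e)
  (fpos : forall v : V, 0 < f v) :
  Order.max (Delta_f s t f + 1)%R (Gamma_f s t f)
  = Order.max (Delta_f s t f + 1)%R (W_f s t f).
Proof.
have [n [D_eq deg_le]] := Delta_f_nat s t fpos.
apply: max_squeeze; first exact/le_ceil/W_star_le_Gamma_star.
rewrite /Gamma_f ceil_le_int; apply: (Gamma_star_le noloop deg_le).
  rewrite D_eq -[(n.+1%:R)%R]/(((n.+1 : int)%:~R)%R : rat) ler_int le_max.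
  by rewrite -addn1 PoszD lexx.
by apply: le_trans (ceil_ge _) _; rewrite ler_int le_max lexx orbT.
Qed.
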